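(* Consider $K$ arms, each a two-state irreducible Markov chain on $\{0,1\}$ with transition probabilities $p_{01}^i,p_{10}^i$, let $\sigma_i=p_{01}^i+p_{10}^i$, $\mu_i=p_{01}^i/\sigma_i$, arm 1 optimal ($\mu_1=\max_j\mu_j$), $\Delta_i=\mu_1-\mu_i$, and let $U=\sum_{i\neq1}\frac{4L}{\mu_1-\mu_i}$ with $L=\frac{360}{\min_j\sigma_j}$. Define $B_a=\sum_{i\neq1}\Delta_i\Big[\frac{2\,\mathbb 1\{p_{01}^1p_{10}^i<p_{10}^1\}}{D(p_{01}^i\|\frac{p_{01}^1p_{10}^i}{p_{10}^1})}+\frac{2}{D(p_{10}^i\|\frac{p_{10}^1p_{01}^i}{p_{01}^1})}\Big]$, $B_b=\sum_{i\neq1}\Delta_i\Big[\frac{\mathbb 1\{\mu_1p_{10}^i<1-\mu_1\}}{D(p_{01}^i\|\frac{\mu_1p_{10}^i}{1-\mu_1})}+\frac{1}{D(p_{10}^i\|\frac{p_{01}^i(1-\mu_1)}{\mu_1})}\Big]$, $B_c=\sum_{i\neq1}\frac{2\Delta_i}{D(\mu_i\|\frac{p_{01}^1}{p_{01}^1+p_{10}^1})}$, $B_d=\sum_{i\neq1}\frac{\Delta_i}{D(\mu_i\|\mu_1)}$. Then: (i) if every suboptimal arm is i.i.d. ($\sigma_i=1$ for $i\neq1$), the asymptotic regret bound of TV-KL-UCB ($B_c$ if arm 1 is truly Markovian, $B_d$ if arm 1 is i.i.d.) is smaller than $U$; (ii) if every suboptimal arm is truly Markovian ($\sigma_i\ne1$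 for $i\neq1$) and $\min_j\sigma_j\ge\frac1{1440}$, the asymptotic regret bound of TV-KL-UCB ($B_a$ if arm 1 is truly Markovian, $B_b$ if arm 1 is i.i.d.) is smaller than $U$.
   Context: $D(a\|b)=a\log\frac ab+(1-a)\log\frac{1-a}{1-b}$ is the Bernoulli KL divergence. An arm is i.i.d. if $p_{01}^i+p_{10}^i=1$ and truly Markovian otherwise. The quantities $B_a,\dots,B_d$ are the upper bounds on $\limsup_n R_n/\log n$ for the TV-KL-UCB algorithm in the respective cases, and $U$ is the asymptotic regret upper bound (on $\limsup_n R_n/\log n$) of the sample-mean UCB algorithm UCB-SM of Tekin and Liu for two-state arms with reward $r(s)=s$. *)

From HB Require Import structures.
From mathcomp Require Import all_boot all_order all_algebra.
From mathcomp Require Import all_classical all_reals.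
From mathcomp Require Import exp.
Set Implicit Arguments. Unset Strict Implicit. Unset Printing Implicit Defensive.
Import Order.TTheory GRing.Theory Num.Theory.
Local Open Scope ring_scope.

Section Defs.
Variable R : realType.

Definition klD (a b : R) : R :=
  a * ln (a / b) + (1 - a) * ln ((1 - a) / (1 - b)).

Variables (K : nat) (p01 p10 : 'I_K -> R) (i1 : 'I_K).

Definition sig (i : 'I_K) : R := p01 i + p10 i.
Definition mu (i : 'I_K) : R := p01 i / sig i.
Definition gap (i : 'I_K) : R := mu i1 - mu i.

Definition sigmin : R := \big[Order.min/sig i1]_(j : 'I_K) sig j.
Definition Lconst : R := 360 / sigmin.

(* Asymptotic regret bound of UCB-SM (Tekin & Liu) *)
Definition U_SM : R := \sum_(i : 'I_K | i != i1) (4 * Lconst) / (mu i1 - mu i).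

Definition B_a : R :=
  \sum_(i : 'I_K | i != i1) gap i *
    (2 * (p01 i1 * p10 i < p10 i1)%R%:R
         / klD (p01 i) (p01 i1 * p10 i / p10 i1)
     + 2 / klD (p10 i) (p10 i1 * p01 i / p01 i1)).

Definition B_b : R :=
  \sum_(i : 'I_K | i != i1) gap i *
    ((mu i1 * p10 i < 1 - mu i1)%R%:R
         / klD (p01 i) (mu i1 * p10 i / (1 - mu i1))
     + 1 / klD (p10 i) (p01 i * (1 - mu i1) / mu i1)).

Definition B_c : R :=
  \sum_(i : 'I_K | i != i1) 2 * gap i / klD (mu i) (p01 i1 / (p01 i1 + p10 i1)).

Definition B_d : R :=
  \sum_(i : 'I_K | i != i1) gap i / klD (mu i) (mu i1).

End Defs.

(* The squared Hellinger distance is a lower bound for the Bernoulli KL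
   divergence, whence the Pinsker-type estimate
   (a - b)^2 <= 2 (a + b) D(a || b).  For i.i.d. suboptimal arms it gives
   D(mu_i || mu_1) >= Delta_i^2 / 4.  For Markovian arms the comparison
   points p01^1 p10^i / p10^1 and p10^1 p01^i / p01^1 of B_a and B_b sit so
   far from p01^i and p10^i that both divergences are at least
   Delta_i^2 sigma_i / 2.  Either way every summand of B_a, ..., B_d is at
   most 8 / (sigma_min Delta_i), far below the summand
   4 L / Delta_i = 1440 / (sigma_min Delta_i) of U. *)

From HB Require Import structures.
From mathcomp Require Import all_boot all_order all_algebra.
From mathcomp Require Import all_classical all_reals.
From mathcomp Require Import exp.
From mathcomp Require Import ring lra.
Set Implicit Arguments. Unset Strict Implicit. Unset Printing Implicit Defensive.
Import Order.TTheory GRing.Theory Num.Theory.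
Local Open Scope ring_scope.

Section KLBounds.
Variable R : realType.
Implicit Types a b c s t x : R.

Lemma ln_le_subr1 x : 0 < x -> ln x <= x - 1.
Proof.
move=> x0; have := @le_ln1Dx R (x - 1); rewrite subrKC; apply; lra.
Qed.

Lemma sqr_mul_ln_ge s t : 0 <= s -> 0 < t ->
  2 * s * (s - t) <= s ^+ 2 * ln (s ^+ 2 / t ^+ 2).
Proof.
move=> s_ge0 t_gt0; have [->|s_neq0] := eqVneq s 0.
  by rewrite mulr0 mul0r expr0n mul0r.
have s_gt0 : 0 < s by rewrite lt_def s_neq0.
have ln_ts : ln t - ln s <= t / s - 1.
  by rewrite -ln_div ?posrE //; apply: ln_le_subr1; apply: divr_gt0.
have -> : s ^+ 2 * ln (s ^+ 2 / t ^+ 2) = - 2 * s ^+ 2 * (ln t - ln s).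
  by rewrite -expr_div_n lnXn ?divr_gt0 // ln_div ?posrE // mulr2n; ring.
have -> : 2 * s * (s - t) = - 2 * s ^+ 2 * (t / s - 1) by field.
have := sqr_ge0 s; nra.
Qed.

Lemma sqr_sub_le_klD a b : 0 <= a <= 1 -> 0 < b < 1 ->
  (a - b) ^+ 2 <= 2 * (a + b) * klD a b.
Proof.
move=> /andP[a_ge0 a_le1] /andP[b_gt0 b_lt1].
set s := Num.sqrt a; set t := Num.sqrt b.
set u := Num.sqrt (1 - a); set v := Num.sqrt (1 - b).
have ha : a = s ^+ 2 by rewrite sqr_sqrtr.
have hb : b = t ^+ 2 by rewrite sqr_sqrtr // ltW.
have hu : 1 - a = u ^+ 2 by rewrite sqr_sqrtr // subr_ge0.
have hv : 1 - b = v ^+ 2 by rewrite sqr_sqrtr // subr_ge0 ltW.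
(* Each half of [klD a b] is bounded by [sqr_mul_ln_ge]; since
   [s^2 + u^2 = t^2 + v^2 = 1] the sum of the bounds is
   [(s - t)^2 + (u - v)^2]. *)
have hellinger : (s - t) ^+ 2 <= klD a b.
  have := @sqr_mul_ln_ge s t (sqrtr_ge0 _); rewrite sqrtr_gt0 => /(_ b_gt0).
  have := @sqr_mul_ln_ge u v (sqrtr_ge0 _); rewrite sqrtr_gt0 subr_gt0 => /(_ b_lt1).
  have := sqr_ge0 (u - v).
  rewrite /klD hu hv {1 2}ha {1}hb; nra.
have sqr_factor : (a - b) ^+ 2 <= 2 * (a + b) * (s - t) ^+ 2.
  rewrite ha hb; have := sqr_ge0 ((s - t) ^+ 2); nra.
apply: (le_trans sqr_factor); apply: ler_wpM2l hellinger; lra.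
Qed.

Lemma klD_ge0 a b : 0 <= a <= 1 -> 0 < b < 1 -> 0 <= klD a b.
Proof.
move=> ha hb; have := sqr_sub_le_klD ha hb; have := sqr_ge0 (a - b).
case/andP: ha => ? _; case/andP: hb => ? _; nra.
Qed.

Lemma invr_klD_le a b c : 0 <= a <= 1 -> 0 < b < 1 -> 0 < c ->
  c * (a + b) <= (a - b) ^+ 2 -> (klD a b)^-1 <= 2 / c.
Proof.
move=> ha hb c_gt0 hc.
have := klD_ge0 ha hb; rewrite le_eqVlt => /predU1P[<-|kl_gt0].
  by rewrite invr0 divr_ge0 // ltW.
rewrite -div1r ler_pdivrMr // mulrAC ler_pdivlMr //.
have := sqr_sub_le_klD ha hb.
case/andP: ha => ? _; case/andP: hb => ? _; nra.
Qed.

End KLBounds.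

Lemma sqr_gap_le (R : realType) (P Q p q : R) : 0 < P -> 0 < Q -> 0 < p -> 0 < q ->
  (P / (P + Q) - p / (p + q)) ^+ 2 * (p + q) * (q + Q * p / P)
    <= (q - Q * p / P) ^+ 2.
Proof.
move=> P_gt0 Q_gt0 p_gt0 q_gt0.
have PQ_gt0 : 0 < P + Q by lra.
have pq_gt0 : 0 < p + q by lra.
rewrite -subr_ge0.
have -> : (q - Q * p / P) ^+ 2
            - (P / (P + Q) - p / (p + q)) ^+ 2 * (p + q) * (q + Q * p / P)
    = (P * q - p * Q) ^+ 2 * (Q * ((P + Q) * (p + q)) + P * (P * p + Q * q))
        / (P ^+ 2 * (P + Q) ^+ 2 * (p + q)).
  by field; rewrite !gt_eqF.
have num_gt0 : 0 < Q * ((P + Q) * (p + q)) + P * (P * p + Q * q).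
  by rewrite addr_gt0 ?mulr_gt0 ?addr_gt0 ?mulr_gt0.
by rewrite divr_ge0 ?(mulr_ge0 (sqr_ge0 _)) ?mulr_ge0 ?sqr_ge0 ?ltW.
Qed.

Section Arms.
Variables (R : realType) (K : nat) (p01 p10 : 'I_K -> R) (i1 : 'I_K).
Hypothesis p01_in : forall i, 0 < p01 i <= 1.
Hypothesis p10_in : forall i, 0 < p10 i <= 1.
Hypothesis mu_lt_mu1 : forall i, i != i1 -> mu p01 p10 i < mu p01 p10 i1.

Local Notation sig := (sig p01 p10).
Local Notation mu := (mu p01 p10).
Local Notation gap := (gap p01 p10 i1).
Local Notation sigmin := (sigmin p01 p10 i1).

Lemma p01_gt0 i : 0 < p01 i. Proof. by case/andP: (p01_in i). Qed.
Lemma p10_gt0 i : 0 < p10 i. Proof. by case/andP: (p10_in i). Qed.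

Lemma sig_gt0 i : 0 < sig i.
Proof. by rewrite addr_gt0 ?p01_gt0 ?p10_gt0. Qed.

Lemma mu_gt0 i : 0 < mu i.
Proof. by rewrite divr_gt0 ?p01_gt0 ?sig_gt0. Qed.

Lemma mu_lt1 i : mu i < 1.
Proof. by rewrite ltr_pdivrMr ?sig_gt0 // mul1r ltrDl p10_gt0. Qed.

Lemma mu_iid i : sig i = 1 -> mu i = p01 i.
Proof. by rewrite /mu => ->; rewrite divr1. Qed.

Lemma subr_mu_iid i : sig i = 1 -> 1 - mu i = p10 i.
Proof. by move=> sig_i; rewrite mu_iid // -sig_i addrC addKr. Qed.

Lemma sigmin_gt0 : 0 < sigmin.
Proof. by apply: lt_bigmin => [|j _]; apply: sig_gt0. Qed.

Lemma sigmin_le i : sigmin <= sig i.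
Proof. exact: bigmin_le. Qed.

Lemma gap_gt0 i : i != i1 -> 0 < gap i.
Proof. by move=> /mu_lt_mu1; rewrite subr_gt0. Qed.

Lemma p01_mul_p10_lt i : i != i1 -> p01 i * p10 i1 < p01 i1 * p10 i.
Proof.
move=> /mu_lt_mu1; rewrite /mu /sig.
rewrite ltr_pdivrMr ?sig_gt0 // mulrAC ltr_pdivlMr ?sig_gt0 //.
by rewrite !(mulrDl, mulrDr) [p01 i1 * p01 i]mulrC ltrD2l.
Qed.

Lemma div_sigmin_gap_le c i : i != i1 -> sigmin <= c ->
  8 / (c * gap i) <= 8 / (sigmin * gap i).
Proof.
move=> /gap_gt0 gap_pos m_le_c.
have c_gt0 : 0 < c := lt_le_trans sigmin_gt0 m_le_c.
rewrite ler_wpM2l // lef_pV2 ?posrE ?mulr_gt0 ?sigmin_gt0 //.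
by rewrite ler_wpM2r // ltW.
Qed.

Lemma sum_lt_U_SM (F : 'I_K -> R) : (2 <= K)%N ->
  (forall i, i != i1 -> F i <= 8 / (sigmin * gap i)) ->
  \sum_(i | i != i1) F i < U_SM p01 p10 i1.
Proof.
move=> K_ge2 F_le; apply: ltr_sum => [|i i_neq].
  pose j0 := Ordinal (ltnW K_ge2); pose j1 := Ordinal K_ge2.
  apply/hasP; have [i1_j0|] := eqVneq i1 j0; [exists j1 | exists j0];
    rewrite ?mem_index_enum 1?eq_sym ?i1_j0 //.
have mg_gt0 : 0 < sigmin * gap i by rewrite mulr_gt0 ?sigmin_gt0 ?gap_gt0.
apply: (le_lt_trans (F_le i i_neq)).
have -> : 4 * Lconst p01 p10 i1 / (mu i1 - mu i) = 1440 / (sigmin * gap i).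
  by rewrite /Lconst /gap; field; rewrite !gt_eqF ?sigmin_gt0 ?gap_gt0.
by rewrite ltr_pM2r ?invr_gt0 // ltr_nat.
Qed.

Lemma invr_klD_mu_le i : i != i1 -> (klD (mu i) (mu i1))^-1 <= 4 / gap i ^+ 2.
Proof.
move=> i_neq; have gap_pos := gap_gt0 i_neq.
have -> : 4 / gap i ^+ 2 = 2 / (gap i ^+ 2 / 2) by field; rewrite gt_eqF.
apply: invr_klD_le.
- by rewrite ltW ?mu_gt0 // ltW ?mu_lt1.
- by rewrite mu_gt0 mu_lt1.
- by rewrite divr_gt0 ?exprn_gt0.
rewrite -sqrrN opprB mulrAC ler_pdivrMr //.
have := mu_lt1 i; have := mu_lt1 i1; have := sqr_ge0 (gap i); rewrite /gap; nra.
Qed.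

Lemma iid_term_le k i : i != i1 -> sig i = 1 -> 0 <= k <= 2 ->
  k * gap i / klD (mu i) (mu i1) <= 8 / (sigmin * gap i).
Proof.
move=> i_neq iid_i /andP[k_ge0 k_le2]; have gap_pos := gap_gt0 i_neq.
have := div_sigmin_gap_le i_neq (sigmin_le i); rewrite iid_i; apply: le_trans.
have inv_le := ler_wpM2l (ltW gap_pos) (invr_klD_mu_le i_neq).
rewrite -mulrA; apply: le_trans (ler_wpM2l k_ge0 inv_le) _.
have -> : k * (gap i * (4 / gap i ^+ 2)) = (4 * k) / (1 * gap i).
  by field; rewrite gt_eqF.
by rewrite ler_wpM2r ?invr_ge0 ?mul1r ?(ltW gap_pos) //; lra.
Qed.

Lemma invr_klD_p10_le i : i != i1 ->
  (klD (p10 i) (p10 i1 * p01 i / p01 i1))^-1 <= 2 / (gap i ^+ 2 * sig i).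
Proof.
move=> i_neq; apply: invr_klD_le.
- by case/andP: (p10_in i) => /ltW -> ->.
- rewrite divr_gt0 ?mulr_gt0 ?p10_gt0 ?p01_gt0 // ltr_pdivrMr ?p01_gt0 // mul1r.
  have := p01_mul_p10_lt i_neq; have := p01_gt0 i1; case/andP: (p10_in i); nra.
- by rewrite mulr_gt0 ?exprn_gt0 ?gap_gt0 ?sig_gt0.
- exact: sqr_gap_le (p01_gt0 i1) (p10_gt0 i1) (p01_gt0 i) (p10_gt0 i).
Qed.

Lemma ind_div_klD_p01_le i : i != i1 ->
  (p01 i1 * p10 i < p10 i1)%R%:R / klD (p01 i) (p01 i1 * p10 i / p10 i1)
    <= 2 / (gap i ^+ 2 * sig i).
Proof.
move=> i_neq; have c_gt0 : 0 < gap i ^+ 2 * sig i.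
  by rewrite mulr_gt0 ?exprn_gt0 ?gap_gt0 ?sig_gt0.
case: ltP => [b_lt1|_]; last by rewrite mul0r divr_ge0 ?ltW.
rewrite mul1r; apply: invr_klD_le => //.
- by case/andP: (p01_in i) => /ltW -> ->.
- by rewrite divr_gt0 ?mulr_gt0 ?p10_gt0 ?p01_gt0 // ltr_pdivrMr ?p10_gt0 // mul1r.
have := sqr_gap_le (p10_gt0 i1) (p01_gt0 i1) (p10_gt0 i) (p01_gt0 i).
have -> : p10 i1 / (p10 i1 + p01 i1) - p10 i / (p10 i + p01 i) = - gap i.
  by rewrite /gap /mu /sig; field; rewrite !gt_eqF ?addr_gt0 ?p01_gt0 ?p10_gt0.
by rewrite sqrrN (addrC (p10 i)).
Qed.

Lemma markov_term_le k i : i != i1 -> 0 <= k <= 2 ->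
  gap i * (k * ((p01 i1 * p10 i < p10 i1)%R%:R / klD (p01 i) (p01 i1 * p10 i / p10 i1))
           + k * (klD (p10 i) (p10 i1 * p01 i / p01 i1))^-1)
    <= 8 / (sigmin * gap i).
Proof.
move=> i_neq /andP[k_ge0 k_le2]; have gap_pos := gap_gt0 i_neq.
apply: le_trans (div_sigmin_gap_le i_neq (sigmin_le i)).
have := ind_div_klD_p01_le i_neq; have := invr_klD_p10_le i_neq.
set X := _ / klD _ _; set Y := _^-1; set c := 2 / _ => Y_le X_le.
have sum_le : k * X + k * Y <= 4 * c.
  have c_ge0 : 0 <= c by rewrite divr_ge0 ?mulr_ge0 ?sqr_ge0 ?ltW ?sig_gt0.
  by have := ler_wpM2l k_ge0 X_le; have := ler_wpM2l k_ge0 Y_le; nra.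
apply: le_trans (ler_wpM2l (ltW gap_pos) sum_le) _.
have -> : gap i * (4 * c) = 8 / (sig i * gap i).
  by rewrite /c; field; rewrite !gt_eqF ?sig_gt0.
exact: lexx.
Qed.

End Arms.

Theorem theorem2 (R : realType) (K : nat) (p01 p10 : 'I_K -> R) (i1 : 'I_K) :
  (2 <= K)%N ->
  (* each arm is an irreducible two-state Markov chain *)
  (forall i, 0 < p01 i <= 1) ->
  (forall i, 0 < p10 i <= 1) ->
  (* arm i1 is the (unique) optimal arm *)
  (forall i, i != i1 -> mu p01 p10 i < mu p01 p10 i1) ->
  (* (i) all suboptimal arms i.i.d. *)
  ((forall i, i != i1 -> sig p01 p10 i = 1) ->
     (sig p01 p10 i1 != 1 -> B_c p01 p10 i1 < U_SM p01 p10 i1) /\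
     (sig p01 p10 i1 = 1 -> B_d p01 p10 i1 < U_SM p01 p10 i1)) /\
  (* (ii) all suboptimal arms truly Markovian, min sigma >= 1/1440 *)
  ((forall i, i != i1 -> sig p01 p10 i != 1) ->
   1 / 1440 <= sigmin p01 p10 i1 ->
     (sig p01 p10 i1 != 1 -> B_a p01 p10 i1 < U_SM p01 p10 i1) /\
     (sig p01 p10 i1 = 1 -> B_b p01 p10 i1 < U_SM p01 p10 i1)).
Proof.
move=> K_ge2 p01_in p10_in mu_lt_mu1.
have sum_lt := sum_lt_U_SM p01_in p10_in mu_lt_mu1 K_ge2.
have iid_le := iid_term_le p01_in p10_in mu_lt_mu1.
have markov_le := markov_term_le p01_in p10_in mu_lt_mu1.
(* The per-arm bound of [markov_term_le] holds for every arm. *)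
split=> [iid | _ _]; split=> [_ | sig1_eq1]; apply: sum_lt => i i_neq.
- by apply: (iid_le _ _ i_neq (iid i i_neq)); lra.
- rewrite -[X in X / klD _ _]mul1r.
  by apply: (iid_le _ _ i_neq (iid i i_neq)); lra.
- by rewrite -mulrA; apply: (markov_le _ _ i_neq); lra.
- rewrite subr_mu_iid // mu_iid // (mulrC (p01 i)) -[_ / klD (p01 i) _]mul1r.
  by apply: (markov_le _ _ i_neq); lra.
Qed.
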